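(* Let $p$ be an odd prime and $q\in\mathbb C_p$ with $|1-q|_p<p^{-1/(p-1)}$. For $k,n\in\mathbb Z_+$ with $k\le n$, $$\int_{\mathbb Z_p}B_{k,n}(x,q)\,d\mu_{-1}(x)=\sum_{j=k}^n\sum_{m=0}^\infty\binom jk\binom nj\binom{j-k+m-1}{m}(-1)^{j-k+m}q^{j-k}(q-1)^mE_{m+j,q}.$$
   Context: For $x\in\mathbb Z_p$, $[x]_q=\frac{1-q^x}{1-q}$. The modified $q$-Bernstein polynomials are $B_{k,n}(x,q)=\binom nk[x]_q^k[1-x]_q^{n-k}$ for $0\le k\le n$. The fermionic $p$-adic integral is $\int_{\mathbb Z_p}f(x)\,d\mu_{-1}(x)=\lim_{N\to\infty}\sum_{x=0}^{p^N-1}f(x)(-1)^x$, and $E_{n,q}=\int_{\mathbb Z_p}[x]_q^n\,d\mu_{-1}(x)$ are the $q$-Euler numbers. Binomial coefficients $\binom{a}{m}$ are the generalized ones (so $\binom{-1}{0}=1$, $\binom{m-1}{m}=0$ for $m\ge1$). *)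

From mathcomp Require Import all_boot all_order all_algebra.
From mathcomp Require Import all_classical all_reals.
From mathcomp Require Import exp.
Set Implicit Arguments. Unset Strict Implicit. Unset Printing Implicit Defensive.
Import Order.TTheory GRing.Theory Num.Theory.
Local Open Scope ring_scope.

(* A complete non-archimedean valued field (K, av) whose absolute value
   restricts on Q to the p-adic absolute value |.|_p (normalised |p|_p = 1/p).
   C_p is such a field; C_p itself is not available in the libraries. *)
Definition padic_valued_field (R : realType) (p : nat) (K : fieldType)
    (av : K -> R) : Prop :=
  (forall x : K, (av x = 0) <-> (x = 0)) /\
      (forall x y : K, av (x * y) = av x * av y) /\
      (forall x y : K, av (x + y) <= Num.max (av x) (av y)) /\
      av (p%:R) = (p%:R)^-1 /\
      (forall n : nat, coprime n p -> av (n%:R) = 1) /\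
      forall u : nat -> K,
        (forall e : R, 0 < e -> exists N, forall m n, (N <= m)%N -> (N <= n)%N ->
            av (u m - u n) < e) ->
        exists l : K, forall e : R, 0 < e -> exists N, forall n, (N <= n)%N ->
            av (u n - l) < e.

Definition cvg_av (R : realType) (K : fieldType) (av : K -> R)
    (u : nat -> K) (l : K) : Prop :=
  forall e : R, 0 < e -> exists N, forall n, (N <= n)%N -> av (u n - l) < e.

Definition qnum (K : fieldType) (q : K) (z : int) : K :=
  if q == 1 then z%:~R else (1 - q ^ z) / (1 - q).

Definition qBernstein (K : fieldType) (k n : nat) (x : nat) (q : K) : K :=
  ('C(n, k))%:R * qnum q x%:Z ^+ k * qnum q (1 - x%:Z) ^+ (n - k).

Definition ferm_sum (K : fieldType) (p : nat) (f : nat -> K) (N : nat) : K :=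
  \sum_(0 <= x < p ^ N) f x * (-1) ^+ x.

(* the fermionic p-adic integral, as the limit of ferm_sum (0 if no limit) *)
Definition ferm_int (R : realType) (K : fieldType) (av : K -> R) (p : nat)
    (f : nat -> K) : K :=
  match boolp.pselect (exists l, cvg_av av (ferm_sum p f) l) with
  | left H => proj1_sig (boolp.cid H)
  | right _ => 0
  end.

Definition qEuler (R : realType) (K : fieldType) (av : K -> R) (p : nat)
    (q : K) (n : nat) : K :=
  ferm_int av p (fun x => qnum q x%:Z ^+ n).

Definition gbinom (a : int) (m : nat) : int :=
  match a with
  | Posz n => ('C(n, m))%:Z
  | Negz n => (-1) ^+ m * ('C(n + m, m))%:Z   (* a = -(n+1) *)
  end.

Definition psum (K : fieldType) (u : nat -> K) (M : nat) : K :=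
  \sum_(0 <= m < M) u m.

From mathcomp Require Import all_boot all_order all_algebra.
From mathcomp Require Import all_classical all_reals.
From mathcomp Require Import exp sequences normedtype.
From mathcomp Require Import ring lra zify.
Set Implicit Arguments. Unset Strict Implicit. Unset Printing Implicit Defensive.
Import Order.TTheory GRing.Theory Num.Theory.
Local Open Scope ring_scope.

(* For natural x write [x]_q = 1 + q + ... + q^(x-1).  Since
   [1 - x]_q = 1 - q q^(-x) [x]_q, the binomial theorem turns B_{k,n}(x,q) into a
   finite sum over j of multiples of [x]_q^j q^(-x(j-k)), and
   q^(-x) = (1 - (1 - q)[x]_q)^(-1) expands as a negative binomial series in
   (1 - q)[x]_q whose partial sums converge uniformly in x, with error at most
   |1 - q|^M.  Integrating term by term gives the q-Euler numbers.
   All fermionic integrals exist because every integrand is bounded by 1 and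
   uniformly continuous for the p-adic metric on nat: for odd p, consecutive
   Riemann sums then differ by an ultrametric sum of small terms, and
   |[p^N]_q| <= max(1/p, |1 - q|)^N. *)

Lemma exprn_lt_eventually (R : realType) (c e : R) : 0 <= c -> c < 1 -> 0 < e ->
  exists N, forall n, (N <= n)%N -> c ^+ n < e.
Proof.
move=> c0 c1 e0; have c1' : `|c| < 1 by rewrite ger0_norm.
have [N _ hN] := @cvgr_dist_lt _ R^o _ _ _ _ _ (cvg_expr c1') _ e0.
by exists N => n /hN; rewrite sub0r normrN ger0_norm ?exprn_ge0.
Qed.

Lemma powR_le1 (R : realType) (a r : R) : 1 <= a -> r <= 0 -> a `^ r <= 1.
Proof. by move=> a1 r0; rewrite -(powRr0 a); apply: ler_powR. Qed.

Lemma mul_bin_subset n j k : (k <= j <= n)%N ->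
  ('C(j, k) * 'C(n, j) = 'C(n, k) * 'C(n - k, j - k))%N.
Proof.
move=> /andP[hkj hjn]; have hkn := leq_trans hkj hjn.
apply/eqP; rewrite -(eqn_pmul2r (_ : 0 < k`! * (j - k)`! * (n - j)`!)%N);
  last by rewrite !muln_gt0 !fact_gt0.
have e := bin_fact (leq_sub2r k hjn); rewrite subnBA // subnK // in e.
apply/eqP; transitivity n`!.
  by rewrite -(bin_fact hjn) -(bin_fact hkj); ring.
by rewrite -(bin_fact hkn) -e; ring.
Qed.

Lemma gbinom_subn1 a m : gbinom ((a + m)%:Z - 1) m = ('C((a + m).-1, m))%:Z.
Proof.
case: m => [|m]; last by rewrite addnS -addn1 PoszD addrK addn1.
by rewrite addn0 bin0; case: (a%:Z - 1) => b; rewrite /gbinom ?bin0 ?addn0 ?mul1r.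
Qed.

Section PadicAbsoluteValue.
Variables (R : realType) (p : nat) (K : fieldType) (av : K -> R).
Hypotheses (p_prime : prime p) (avP : padic_valued_field p av).

Lemma av_eq0 x : av x = 0 -> x = 0.
Proof. by case: avP => h _; apply: (h x).1. Qed.

Lemma av0 : av 0 = 0.
Proof. by case: avP => h _; apply: (h 0).2. Qed.

Lemma avM x y : av (x * y) = av x * av y.
Proof. by case: avP => _ []. Qed.

Lemma av_ultra x y : av (x + y) <= Num.max (av x) (av y).
Proof. by case: avP => _ [_ []]. Qed.

Lemma av_natp : av p%:R = p%:R^-1.
Proof. by case: avP => _ [_ [_ []]]. Qed.

Lemma av_coprime n : coprime n p -> av n%:R = 1.
Proof. by case: avP => _ [_ [_ [_ [h _]]]]; apply: h. Qed.

Lemma av1 : av 1 = 1.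
Proof. by have := av_coprime (coprime1n p). Qed.

(* The ultrametric inequality alone allows av (-1) = -1 (take the sign
   function on Q); it is |p|_p < 1 that rules this out. *)
Lemma avN1 : av (-1) = 1.
Proof.
have : av (-1) ^+ 2 = 1 by rewrite expr2 -avM mulrNN mulr1 av1.
move/eqP; rewrite sqrf_eq1 => /orP[/eqP //| /eqP avN1].
have p1 : (p%:R : R)^-1 < 1 by rewrite invf_lt1 ?ltr1n ?prime_gt1 ?ltr0n ?prime_gt0.
have := av_ultra p%:R ((-1) * p.-1%:R).
have -> : p%:R + (-1) * p.-1%:R = 1 :> K.
  by rewrite -[in p%:R](prednK (prime_gt0 p_prime)) -natr1; ring.
rewrite av1 avM avN1 av_natp av_coprime; last first.
  by rewrite -{2}(prednK (prime_gt0 p_prime)) coprimenS.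
by rewrite le_max => /orP[]; lra.
Qed.

Lemma avN x : av (- x) = av x.
Proof. by rewrite -mulN1r avM avN1 mul1r. Qed.

Lemma avBC x y : av (x - y) = av (y - x).
Proof. by rewrite -opprB avN. Qed.

Lemma av_ge0 x : 0 <= av x.
Proof. by have := av_ultra x (- x); rewrite subrr av0 avN maxxx. Qed.

Lemma avD_le x y b : av x <= b -> av y <= b -> av (x + y) <= b.
Proof. by move=> hx hy; apply: le_trans (av_ultra x y) _; rewrite ge_max hx. Qed.

Lemma avD_lt x y b : av x < b -> av y < b -> av (x + y) < b.
Proof. by move=> hx hy; apply: le_lt_trans (av_ultra x y) _; rewrite gt_max hx. Qed.

Lemma av_sum_le (I : Type) (r : seq I) (P : pred I) (F : I -> K) b :
  0 <= b -> (forall i, P i -> av (F i) <= b) -> av (\sum_(i <- r | P i) F i) <= b.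
Proof. by move=> b0; apply: (big_ind (fun y => av y <= b)); rewrite ?av0 // => x y; apply: avD_le. Qed.

Lemma av_sum_lt (I : Type) (r : seq I) (P : pred I) (F : I -> K) b :
  0 < b -> (forall i, P i -> av (F i) < b) -> av (\sum_(i <- r | P i) F i) < b.
Proof. by move=> b0; apply: (big_ind (fun y => av y < b)); rewrite ?av0 // => x y; apply: avD_lt. Qed.

Lemma av_nat_le1 n : av n%:R <= 1.
Proof. by elim: n => [|n IH]; rewrite ?av0 // -natr1 avD_le // av1. Qed.

Lemma avX x n : av (x ^+ n) = av x ^+ n.
Proof. by elim: n => [|n IH]; rewrite ?expr0 ?av1 // !exprS avM IH. Qed.

Lemma av_sign n : av ((-1) ^+ n) = 1.
Proof. by rewrite avX avN1 expr1n. Qed.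

Lemma avV x : av x^-1 = (av x)^-1.
Proof.
have [->|x0] := eqVneq x 0; first by rewrite invr0 av0 invr0.
have ax0 : av x != 0 by apply: contra_neq x0 => /av_eq0.
by apply: (mulfI ax0); rewrite -avM !mulfV ?av1.
Qed.

Lemma avM_le1 x y : av x <= 1 -> av y <= 1 -> av (x * y) <= 1.
Proof. by move=> hx hy; rewrite avM mulr_ile1 ?av_ge0. Qed.

Lemma eq_cvg_av u v l : cvg_av av u l -> u =1 v -> cvg_av av v l.
Proof. by move=> h /boolp.funext <-. Qed.

Lemma cvg_av_unique u l1 l2 : cvg_av av u l1 -> cvg_av av u l2 -> l1 = l2.
Proof.
move=> h1 h2; apply/eqP; rewrite -subr_eq0; apply/eqP/av_eq0/eqP.
rewrite eq_le av_ge0 andbT leNgt; apply/negP => he.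
have [N1 hN1] := h1 _ he; have [N2 hN2] := h2 _ he.
have : av ((u (N1 + N2)%N - l2) - (u (N1 + N2)%N - l1)) < av (l1 - l2).
  by apply: avD_lt; rewrite ?avN; [apply: hN2; rewrite leq_addl | apply: hN1; rewrite leq_addr].
by rewrite (_ : _ - _ = l1 - l2) ?ltxx //; ring.
Qed.

Lemma cvg_avD u v l1 l2 : cvg_av av u l1 -> cvg_av av v l2 ->
  cvg_av av (fun n => u n + v n) (l1 + l2).
Proof.
move=> h1 h2 e e0; have [N1 hN1] := h1 _ e0; have [N2 hN2] := h2 _ e0.
exists (N1 + N2)%N => n hn; rewrite (_ : _ - _ = (u n - l1) + (v n - l2)); last by ring.
by apply: avD_lt; [apply: hN1 | apply: hN2]; apply: leq_trans hn; rewrite ?leq_addr ?leq_addl.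
Qed.

Lemma cvg_avZ c u l : av c <= 1 -> cvg_av av u l -> cvg_av av (fun n => c * u n) (c * l).
Proof.
move=> hc h e e0; have [N hN] := h _ e0; exists N => n /hN.
by rewrite -mulrBr avM; apply: le_lt_trans; rewrite ler_piMl ?av_ge0.
Qed.

Lemma cvg_avB u v l1 l2 : cvg_av av u l1 -> cvg_av av v l2 ->
  cvg_av av (fun n => u n - v n) (l1 - l2).
Proof.
move=> h1 h2; have h2N : cvg_av av (fun n => -1 * v n) (-1 * l2).
  by apply: cvg_avZ; rewrite ?avN1.
by rewrite -mulN1r; apply: (eq_cvg_av (cvg_avD h1 h2N)) => n; rewrite mulN1r.
Qed.

Lemma cvg_av_sum (I : eqType) (r : seq I) (U : I -> nat -> K) (l : I -> K) :
  (forall i, i \in r -> cvg_av av (U i) (l i)) ->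
  cvg_av av (fun n => \sum_(i <- r) U i n) (\sum_(i <- r) l i).
Proof.
elim: r => [|i r IH] hU.
  by move=> e e0; exists 0%N => n _; rewrite !big_nil subrr av0.
rewrite big_cons; apply: (eq_cvg_av (cvg_avD (hU i (mem_head i r)) (IH _))) => [j hj|n].
  by apply: hU; rewrite in_cons hj orbT.
by rewrite big_cons.
Qed.

Lemma ferm_sumB (f g : nat -> K) :
  ferm_sum p (fun x => f x - g x) =1 (fun N => ferm_sum p f N - ferm_sum p g N).
Proof. by move=> N; rewrite /ferm_sum -sumrB; apply: eq_bigr => x _; rewrite mulrBl. Qed.

Lemma ferm_sum_sum (I : Type) (r : seq I) (F : I -> nat -> K) :
  ferm_sum p (fun x => \sum_(i <- r) F i x) =1 (fun N => \sum_(i <- r) ferm_sum p (F i) N).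
Proof. by move=> N; rewrite /ferm_sum; under eq_bigr do rewrite mulr_suml; rewrite exchange_big. Qed.

Lemma ferm_sumZ c (f : nat -> K) :
  ferm_sum p (fun x => c * f x) =1 (fun N => c * ferm_sum p f N).
Proof. by move=> N; rewrite /ferm_sum mulr_sumr; apply: eq_bigr => x _; rewrite mulrA. Qed.

Lemma cvg_ferm_sum_big (I : eqType) (r : seq I) (F : I -> nat -> K) (l : I -> K) :
  (forall i, i \in r -> cvg_av av (ferm_sum p (F i)) (l i)) ->
  cvg_av av (ferm_sum p (fun x => \sum_(i <- r) F i x)) (\sum_(i <- r) l i).
Proof. by move=> hF; apply: (eq_cvg_av (cvg_av_sum hF)) => N; rewrite ferm_sum_sum. Qed.

Lemma ferm_sum_limit_le (f : nat -> K) l b :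
  (forall x, av (f x) <= b) -> cvg_av av (ferm_sum p f) l -> av l <= b.
Proof.
move=> hf hl; have b0 : 0 <= b := le_trans (av_ge0 _) (hf 0%N).
rewrite leNgt; apply/negP => hlb.
have [N /(_ N (leqnn N)) hN] := hl _ (le_lt_trans b0 hlb).
have hS : av (ferm_sum p f N) <= b.
  by apply: av_sum_le => // x _; rewrite avM av_sign mulr1.
have := av_ultra (ferm_sum p f N) (l - ferm_sum p f N).
rewrite addrC subrK avBC le_max => /orP[] h.
  by have := lt_le_trans hlb (le_trans h hS); rewrite ltxx.
by have := lt_le_trans hN h; rewrite ltxx.
Qed.

Lemma ferm_intE (f : nat -> K) l : cvg_av av (ferm_sum p f) l -> ferm_int av p f = l.
Proof.
move=> hl; rewrite /ferm_int; case: boolp.pselect => [h|[]]; last by exists l.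
by case: (boolp.cid h) => /= l' hl'; apply: cvg_av_unique hl' hl.
Qed.

Lemma ferm_int_unif_limit (F : nat -> nat -> K) (g : nat -> K) (v : nat -> K) l
    (b : nat -> R) :
  (forall M, cvg_av av (ferm_sum p (F M)) (v M)) -> cvg_av av (ferm_sum p g) l ->
  (forall M x, av (F M x - g x) <= b M) ->
  (forall e, 0 < e -> exists M0, forall M, (M0 <= M)%N -> b M < e) ->
  cvg_av av v l.
Proof.
move=> hF hg hb hb0 e e0; have [M0 hM0] := hb0 e e0; exists M0 => M hM.
have hFg := eq_cvg_av (cvg_avB (hF M) hg) (fun N => esym (ferm_sumB _ _ N)).
exact: le_lt_trans (ferm_sum_limit_le (hb M) hFg) (hM0 M hM).
Qed.

Lemma av_cauchy_cvg u :
  (forall e, 0 < e -> exists N, forall m n, (N <= m)%N -> (N <= n)%N -> av (u m - u n) < e) ->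
  exists l, cvg_av av u l.
Proof. by case: avP => _ [_ [_ [_ [_ complete]]]]; apply: complete. Qed.

Lemma sumr_sign n : \sum_(0 <= i < n) (-1) ^+ i = (odd n)%:R :> K.
Proof.
elim: n => [|n IH]; first by rewrite big_geq.
by rewrite big_nat_recr //= IH -signr_odd; case: (odd n); rewrite /= ?expr1 ?expr0; ring.
Qed.

Definition negbin_sum a M (u : K) := \sum_(0 <= m < M) ('C((a + m).-1, m))%:R * u ^+ m.

Lemma negbin_sum0 M u : negbin_sum 0 M.+1 u = 1.
Proof.
elim: M => [|M IH]; first by rewrite /negbin_sum big_nat1 bin0 mulr1.
by rewrite /negbin_sum big_nat_recr //= -/(negbin_sum 0 M.+1 u) IH bin_small // mul0r addr0.
Qed.

Lemma negbin_sumS a M u : (1 - u) * negbin_sum a.+1 M.+1 u =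
  negbin_sum a M.+1 u - ('C((a.+1 + M).-1, M))%:R * u ^+ M.+1.
Proof.
elim: M => [|M IH]; first by rewrite /negbin_sum !big_nat1 !addn0 !bin0; ring.
have binS' : ('C((a.+1 + M.+1).-1, M.+1))%:R =
    ('C((a.+1 + M).-1, M))%:R + ('C((a + M.+1).-1, M.+1))%:R :> K.
  by rewrite -natrD !addSn !addnS /= binS addnC.
rewrite /negbin_sum big_nat_recr //= [in RHS]big_nat_recr //=.
rewrite -/(negbin_sum a.+1 M.+1 u) -/(negbin_sum a M.+1 u) mulrDr IH binS' !exprS; ring.
Qed.

Lemma negbin_sum_err a M u : av (1 - u) = 1 ->
  av (negbin_sum a M u - (1 - u)^-1 ^+ a) <= av u ^+ M.
Proof.
move=> hu; have avV1u : av (1 - u)^-1 = 1 by rewrite avV hu invr1.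
case: M => [|M]; first by rewrite /negbin_sum big_geq // sub0r avN avX avV1u !expr1n.
have hu0 : 1 - u != 0 by apply/eqP => h0; move: hu; rewrite h0 av0 => /esym/eqP; rewrite oner_eq0.
elim: a => [|a IH]; first by rewrite negbin_sum0 subrr av0 exprn_ge0 ?av_ge0.
have -> : negbin_sum a.+1 M.+1 u =
    (1 - u)^-1 * (negbin_sum a M.+1 u - ('C((a.+1 + M).-1, M))%:R * u ^+ M.+1).
  by rewrite -negbin_sumS mulKf.
rewrite [(1 - u)^-1 ^+ a.+1]exprS -mulrBr avM avV1u mul1r addrAC.
apply: avD_le => //.
by rewrite avN avM avX ler_piMl ?exprn_ge0 ?av_ge0 ?av_nat_le1.
Qed.

Definition qnat (r : K) x := \sum_(i < x) r ^+ i.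

Lemma qnatD r a b : qnat r (a + b) = qnat r a + r ^+ a * qnat r b.
Proof. by rewrite /qnat big_split_ord /= mulr_sumr; congr (_ + _); apply: eq_bigr => i _; rewrite exprD. Qed.

Lemma qnatM r a b : qnat r (a * b) = qnat r a * qnat (r ^+ a) b.
Proof.
elim: b => [|b IH]; first by rewrite muln0 /qnat !big_ord0 mulr0.
by rewrite mulnSr qnatD IH /qnat [in RHS]big_ord_recr -exprM /=; ring.
Qed.

Lemma av_qnat_le1 r x : av r <= 1 -> av (qnat r x) <= 1.
Proof. by move=> hr; apply: av_sum_le => // i _; rewrite avX exprn_ile1 ?av_ge0. Qed.

Hypothesis p_odd : odd p.

(* Uniform continuity for the p-adic metric on nat; the bound by 1 makes the
   class closed under products. *)
Definition padic_ucont (f : nat -> K) :=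
  (forall x, av (f x) <= 1) /\
  forall e, 0 < e -> exists N, forall x y, av (f (x + p ^ N * y)%N - f x) < e.

(* Split [0, p^(N+1)) into p blocks of length p^N: as p^N is odd, the sign of
   block i is (-1)^i, and as p is odd these signs sum to 1. *)
Lemma ferm_sumS_near (f : nat -> K) e N0 :
  (forall x y, av (f (x + p ^ N0 * y)%N - f x) < e) ->
  forall N, (N0 <= N)%N -> av (ferm_sum p f N.+1 - ferm_sum p f N) < e.
Proof.
move=> hf N hN; set P := (p ^ N)%N.
have e0 : 0 < e := le_lt_trans (av_ge0 _) (hf 0%N 0%N).
have oP : odd P by rewrite oddX p_odd orbT.
have -> : ferm_sum p f N.+1 =
    \sum_(0 <= i < p) (-1) ^+ i * \sum_(0 <= y < P) f (y + P * i)%N * (-1) ^+ y.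
  rewrite /ferm_sum expnS big_nat_mul; apply: eq_bigr => i _.
  rewrite -/P mulSn -{1}(add0n (i * P)%N) big_addn addnK mulr_sumr.
  by apply: eq_bigr => y _; rewrite exprD mulnC exprM -[(-1) ^+ P]signr_odd oP expr1; ring.
have -> : ferm_sum p f N = \sum_(0 <= i < p) (-1) ^+ i * ferm_sum p f N.
  by rewrite -mulr_suml sumr_sign p_odd mul1r.
rewrite -sumrB; apply: av_sum_lt => // i _.
rewrite -mulrBr avM av_sign mul1r /ferm_sum -sumrB; apply: av_sum_lt => // y _.
by rewrite -mulrBl avM av_sign mulr1 /P -(subnKC hN) expnD -mulnA.
Qed.

Lemma padic_ucont_ferm_cvg (f : nat -> K) :
  padic_ucont f -> exists l, cvg_av av (ferm_sum p f) l.
Proof.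
case=> _ hf; apply: av_cauchy_cvg => e e0; have [N0 hN0] := hf _ e0; exists N0.
have hd N d : (N0 <= N)%N -> av (ferm_sum p f (N + d) - ferm_sum p f N) < e.
  move=> hN; elim: d => [|d IH]; first by rewrite addn0 subrr av0.
  rewrite addnS -(subrKA (ferm_sum p f (N + d))); apply: avD_lt => //.
  by apply: ferm_sumS_near hN0 _ _; apply: leq_trans hN (leq_addr _ _).
move=> m n hm hn; case: (leqP m n) => hmn.
  by rewrite avBC -(subnKC hmn); apply: hd.
by rewrite -(subnKC (ltnW hmn)); apply: hd.
Qed.

Lemma eq_padic_ucont (f g : nat -> K) : f =1 g -> padic_ucont f -> padic_ucont g.
Proof. by move=> /boolp.funext ->. Qed.

Lemma padic_ucont_cst c : av c <= 1 -> padic_ucont (fun=> c).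
Proof. by move=> hc; split=> // e e0; exists 0%N => x y; rewrite subrr av0. Qed.

Lemma padic_ucontM (f g : nat -> K) :
  padic_ucont f -> padic_ucont g -> padic_ucont (fun x => f x * g x).
Proof.
move=> [bf cf] [bg cg]; split=> [x|e e0]; first exact: avM_le1.
have [N1 h1] := cf _ e0; have [N2 h2] := cg _ e0; exists (N1 + N2)%N => x y.
set z := (x + p ^ (N1 + N2) * y)%N.
have -> : f z * g z - f x * g x = f z * (g z - g x) + (f z - f x) * g x by ring.
apply: avD_lt; rewrite avM.
  apply: le_lt_trans (ler_piMl (av_ge0 _) (bf z)) _.
  by rewrite /z expnD (mulnC (p ^ N1)%N) -mulnA; apply: h2.
apply: le_lt_trans (ler_piMr (av_ge0 _) (bg x)) _.
by rewrite /z expnD -mulnA; apply: h1.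
Qed.

Lemma padic_ucontX (f : nat -> K) r : padic_ucont f -> padic_ucont (fun x => f x ^+ r).
Proof.
move=> hf; elim: r => [|r IH]; first by apply: padic_ucont_cst; rewrite av1.
by apply: eq_padic_ucont (padic_ucontM hf IH) => x; rewrite exprS.
Qed.

Section QNumbers.
Variable q : K.
Hypothesis q_near1 : av (1 - q) < 1.

Lemma av_q : av q = 1.
Proof.
apply/eqP; rewrite eq_le; apply/andP; split.
  by rewrite -[q](subKr 1) avD_le ?av1 // avN ltW.
have := av_ultra q (1 - q); rewrite addrC subrK av1.
by rewrite le_max => /orP[//|]; rewrite leNgt q_near1.
Qed.

Lemma q_neq0 : q != 0.
Proof. by apply/eqP => q0; have := av_q; rewrite q0 av0 => /esym/eqP; rewrite oner_eq0. Qed.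

Definition qrate := Num.max p%:R^-1 (av (1 - q)).

Lemma qrate_ge0 : 0 <= qrate.
Proof. by rewrite le_max av_ge0 orbT. Qed.

Lemma qrate_lt1 : qrate < 1.
Proof. by rewrite gt_max q_near1 andbT invf_lt1 ?ltr1n ?prime_gt1 ?ltr0n ?prime_gt0. Qed.

Lemma av_qnatq_le1 x : av (qnat q x) <= 1.
Proof. by rewrite av_qnat_le1 ?av_q. Qed.

(* [p^(N+1)]_q = [p^N]_q [p]_Q with Q = q^(p^N), and [p]_Q = p + sum_i (Q^i - 1)
   where |Q^i - 1| <= |Q - 1| <= |q - 1| and |p| = 1/p. *)
Lemma av_qnat_expn N : av (qnat q (p ^ N)) <= qrate ^+ N.
Proof.
elim: N => [|N IH]; first by rewrite expn0 expr0 /qnat big_ord1 expr0 av1.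
rewrite expnSr qnatM avM exprSr ler_pM ?av_ge0 //.
set Q := q ^+ (p ^ N).
have avQ : av Q = 1 by rewrite avX av_q expr1n.
have avQ1 : av (Q - 1) <= av (1 - q) by rewrite /Q subrX1 avM avBC ler_piMr ?av_ge0 ?av_qnatq_le1.
have -> : qnat Q p = p%:R + \sum_(i < p) (Q ^+ i - 1).
  by rewrite sumrB sumr_const card_ord addrC subrK.
apply: avD_le; first by rewrite av_natp le_max lexx.
apply: av_sum_le => [|i _]; first exact: qrate_ge0.
rewrite subrX1 avM; apply: le_trans (_ : av (1 - q) <= _); last by rewrite le_max lexx orbT.
by apply: le_trans avQ1; rewrite ler_piMr ?av_ge0 ?av_qnat_le1 ?avQ.
Qed.

Lemma av_qnat_pmul N y : av (qnat q (p ^ N * y)) <= qrate ^+ N.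
Proof.
rewrite qnatM avM (le_trans _ (av_qnat_expn N)) // ler_piMr ?av_ge0 //.
by rewrite av_qnat_le1 // avX av_q expr1n.
Qed.

Lemma padic_ucont_qnat : padic_ucont (qnat q).
Proof.
split=> [x|e e0]; first exact: av_qnatq_le1.
have [N /(_ N (leqnn N)) hN] := exprn_lt_eventually qrate_ge0 qrate_lt1 e0.
exists N => x y; rewrite qnatD addrAC subrr add0r avM avX av_q expr1n mul1r.
exact: le_lt_trans (av_qnat_pmul N y) hN.
Qed.

Lemma padic_ucont_qinv : padic_ucont (fun x => (q ^+ x)^-1).
Proof.
have avqx x : av (q ^+ x)^-1 = 1 by rewrite avV avX av_q expr1n invr1.
split=> [x|e e0]; first by rewrite avqx.
have [N /(_ N (leqnn N)) hN] := exprn_lt_eventually qrate_ge0 qrate_lt1 e0.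
exists N => x y; set z := (p ^ N * y)%N.
have -> : (q ^+ (x + z))^-1 - (q ^+ x)^-1 = - ((q ^+ x)^-1 * (q ^+ z)^-1 * (q ^+ z - 1)).
  by rewrite exprD invfM; field; rewrite !expf_neq0 ?q_neq0.
rewrite avN !avM !avqx !mul1r subrX1 avM avBC; apply: le_lt_trans hN.
by apply: le_trans (av_qnat_pmul N y); rewrite ler_piMl ?av_ge0 // ltW.
Qed.

Lemma qnum_nat x : qnum q x%:Z = qnat q x.
Proof.
rewrite /qnum; case: eqP => [->|/eqP q1].
  by rewrite /qnat (eq_bigr (fun=> 1)) => [|i _]; rewrite ?expr1n // sumr_const card_ord.
have q1' : 1 - q != 0 by rewrite subr_eq0 eq_sym.
by rewrite -exprnP -opprB subrX1 -/(qnat q x); field.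
Qed.

Lemma qnum_1subn x : qnum q (1 - x%:Z) = 1 - q * (q ^+ x)^-1 * qnat q x.
Proof.
have := qnum_nat x; rewrite /qnum; case: eqP => [-> <-|/eqP q1 qx].
  by rewrite expr1n invr1 mulr1 mul1r intrB.
have q1' : 1 - q != 0 by rewrite subr_eq0 eq_sym.
rewrite -qx expfzDr ?q_neq0 // expr1z -exprnN -exprnP.
by field; rewrite q1' expf_neq0 ?q_neq0.
Qed.

Lemma qEuler_cvg r : cvg_av av (ferm_sum p (fun x => qnum q x%:Z ^+ r)) (qEuler av p q r).
Proof.
have [l hl] := padic_ucont_ferm_cvg (padic_ucontX r padic_ucont_qnat).
have {}hl : cvg_av av (ferm_sum p (fun x => qnum q x%:Z ^+ r)) l.
  by apply: (eq_cvg_av hl) => N; apply: eq_bigr => x _; rewrite qnum_nat.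
by rewrite /qEuler (ferm_intE hl).
Qed.

Section QBernstein.
Variables k n : nat.

Definition bern_coef j := ('C(j, k))%:R * ('C(n, j))%:R * (-1) ^+ (j - k) * q ^+ (j - k).

Definition bern_term j x := bern_coef j * (qnat q x ^+ j * (q ^+ x)^-1 ^+ (j - k)).

(* [1 - x]_q = 1 - q q^(-x) [x]_q; expand its power by the binomial theorem. *)
Lemma qBernstein_expand x : (k <= n)%N ->
  qBernstein k n x q = \sum_(k <= j < n.+1) bern_term j x.
Proof.
move=> hkn; rewrite /qBernstein qnum_nat qnum_1subn -[in RHS](add0n k) big_addn subSn //.
set X := - (q * (q ^+ x)^-1 * qnat q x).
have -> : 1 - q * (q ^+ x)^-1 * qnat q x = X + 1 by rewrite /X; ring.
rewrite exprD1n -(big_mkord xpredT (fun i => X ^+ i *+ 'C(n - k, i))) mulr_sumr.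
apply: eq_big_nat => i /andP[_ hi]; rewrite /bern_term /bern_coef addnK.
have hikn : (k <= i + k <= n)%N by lia.
have -> : X ^+ i = (-1) ^+ i * (q ^+ i * (q ^+ x)^-1 ^+ i * qnat q x ^+ i).
  by rewrite /X -!exprMn; congr (_ ^+ _); ring.
by rewrite -natrM mul_bin_subset // addnK natrM mulr_natr exprD; ring.
Qed.

Lemma av_bern_coef_le1 j : av (bern_coef j) <= 1.
Proof. by rewrite /bern_coef !avM_le1 ?av_nat_le1 ?av_sign // avX av_q expr1n. Qed.

Lemma bern_term_cvg j : cvg_av av (ferm_sum p (bern_term j)) (ferm_int av p (bern_term j)).
Proof.
have hu : padic_ucont (bern_term j) := padic_ucontM (padic_ucont_cst (av_bern_coef_le1 j))
  (padic_ucontM (padic_ucontX j padic_ucont_qnat) (padic_ucontX (j - k) padic_ucont_qinv)).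
by have [l hl] := padic_ucont_ferm_cvg hu; rewrite (ferm_intE hl).
Qed.

Lemma qBernstein_ferm_cvg : (k <= n)%N ->
  cvg_av av (ferm_sum p (fun x => qBernstein k n x q))
    (\sum_(k <= j < n.+1) ferm_int av p (bern_term j)).
Proof.
move=> hkn; apply: (eq_cvg_av (cvg_ferm_sum_big (fun j _ => bern_term_cvg j))) => N.
by apply: eq_bigr => x _; rewrite qBernstein_expand.
Qed.

Definition euler_coef j m := ('C(j, k))%:R * ('C(n, j))%:R
  * (gbinom ((j - k + m)%:Z - 1) m)%:~R * (-1) ^+ (j - k + m) * q ^+ (j - k) * (q - 1) ^+ m.

Lemma euler_coefE j m :
  euler_coef j m = bern_coef j * ('C((j - k + m).-1, m))%:R * (1 - q) ^+ m.
Proof.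
have -> : (1 - q) ^+ m = (-1) ^+ m * (q - 1) ^+ m by rewrite -exprMn mulN1r opprB.
by rewrite /euler_coef /bern_coef gbinom_subn1 -pmulrn exprD; ring.
Qed.

Lemma av_euler_coef_le1 j m : av (euler_coef j m) <= 1.
Proof.
rewrite euler_coefE; apply: avM_le1; first by rewrite avM_le1 ?av_bern_coef_le1 ?av_nat_le1.
by rewrite avX exprn_ile1 ?av_ge0 // ltW.
Qed.

(* q^(-x) = (1 - (1 - q) [x]_q)^(-1), expanded as a negative binomial series. *)
Lemma euler_partial_sum_err j M x :
  av (\sum_(0 <= m < M) euler_coef j m * qnum q x%:Z ^+ (m + j) - bern_term j x)
    <= av (1 - q) ^+ M.
Proof.
set t := qnat q x; set u := (1 - q) * t.
have equ : 1 - u = q ^+ x by rewrite /u -[q ^+ x](subrK 1) subrX1 -/(qnat q x) -/t; ring.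
have -> : \sum_(0 <= m < M) euler_coef j m * qnum q x%:Z ^+ (m + j) =
    bern_coef j * (t ^+ j * negbin_sum (j - k) M u).
  rewrite /negbin_sum !mulr_sumr; apply: eq_bigr => m _.
  by rewrite euler_coefE qnum_nat -/t exprD exprMn; ring.
rewrite /bern_term -equ -!mulrBr avM.
apply: le_trans (ler_piMl (av_ge0 _) (av_bern_coef_le1 j)) _; rewrite avM.
apply: le_trans (ler_piMl (av_ge0 _) _) _; first by rewrite avX exprn_ile1 ?av_ge0 ?av_qnatq_le1.
apply: le_trans (negbin_sum_err _ _ _) _; first by rewrite equ avX av_q expr1n.
by rewrite lerXn2r ?nnegrE ?av_ge0 // /u avM ler_piMr ?av_ge0 ?av_qnatq_le1.
Qed.

Lemma euler_series_cvg j :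
  cvg_av av (psum (fun m => euler_coef j m * qEuler av p q (m + j)))
    (ferm_int av p (bern_term j)).
Proof.
apply: (ferm_int_unif_limit _ (bern_term_cvg j) (euler_partial_sum_err j)).
  move=> M; apply: cvg_ferm_sum_big => m _.
  apply: (eq_cvg_av (cvg_avZ (av_euler_coef_le1 j m) (qEuler_cvg (m + j)))) => N.
  by rewrite ferm_sumZ.
by move=> e; apply: exprn_lt_eventually (av_ge0 _) q_near1.
Qed.

End QBernstein.
End QNumbers.
End PadicAbsoluteValue.

Unset Implicit Arguments.

Theorem mainTheorem9 (R : realType) (p : nat) (K : fieldType) (av : K -> R)
    (q : K) (k n : nat) :
  prime p -> odd p -> padic_valued_field p av ->
  av (1 - q) < (p%:R : R) `^ (- (p.-1%:R)^-1) ->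
  (k <= n)%N ->
  (* the integrals involved exist *)
  (exists I, cvg_av av (ferm_sum p (fun x => qBernstein k n x q)) I) /\
  (forall r : nat, exists E, cvg_av av (ferm_sum p (fun x => qnum q x%:Z ^+ r)) E) /\
  (* each inner series over m converges, and the identity holds *)
  exists S : nat -> K,
    (forall j, (k <= j <= n)%N ->
      cvg_av av
        (psum (fun m => ('C(j, k))%:R * ('C(n, j))%:R
                        * (gbinom ((j - k + m)%:Z - 1) m)%:~R
                        * (-1) ^+ (j - k + m) * q ^+ (j - k) * (q - 1) ^+ m
                        * qEuler av p q (m + j)))
        (S j)) /\
    ferm_int av p (fun x => qBernstein k n x q) = \sum_(k <= j < n.+1) S j.
Proof.
move=> p_prime p_odd avP radius hkn.
have q_near1 : av (1 - q) < 1.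
  apply: lt_le_trans radius (powR_le1 _ _); first by rewrite ler1n prime_gt0.
  by rewrite oppr_le0 invr_ge0 ler0n.
have hB := qBernstein_ferm_cvg p_prime avP p_odd q_near1 hkn.
split; first by eexists; exact: hB.
split; first by move=> r; eexists; exact: qEuler_cvg.
exists (fun j => ferm_int av p (bern_term q k n j)); split; last exact: ferm_intE hB.
by move=> j _; exact: euler_series_cvg.
Qed.
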